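(* Let $f$ be a stable update function. Suppose the configuration $\mathcal U^{(t)}=(\vec u_1^{(t)},\dots,\vec u_n^{(t)})$ is strictly convex with coefficients $b_1,\dots,b_n\in\{-1,1\}$, i.e. $\langle b_i\vec u_i^{(t)},b_j\vec u_j^{(t)}\rangle>0$ for all $i,j\in[n]$, and let $\mathcal U^{(t+1)}$ be obtained from $\mathcal U^{(t)}$ by a single interaction. Then $\langle b_i\vec u_i^{(t+1)},b_j\vec u_j^{(t+1)}\rangle>0$ for all $i,j\in[n]$; in particular $\mathcal U^{(t+1)}$ is strictly convex with the same coefficients.
   Context: Opinions are unit vectors in $\mathbb R^d$; a configuration is an $n$-tuple, $A_{ij}=\langle\vec u_i,\vec u_j\rangle$. An interaction $(i,j)$, $i\ne j$, replaces $\vec u_i$ by $\vec w/\|\vec w\|$ with $\vec w=\vec u_i+f(A_{ij})\vec u_j$, leaving other opinions unchanged. $f:[-1,1]\to\mathbb R$ is stable if continuous and $\operatorname{sign}f(A)=\operatorname{sign}A$ for all $A$. A configuration is strictly convex if there exist $b_1,\dots,b_n\in\{\pm1\}$ with $\langle b_i\vec u_i,b_j\vec u_j\rangle>0$ for all $i,j$. *)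

From HB Require Import structures.
From mathcomp Require Import all_boot all_order all_algebra.
Set Implicit Arguments. Unset Strict Implicit. Unset Printing Implicit Defensive.
Import Order.TTheory GRing.Theory Num.Theory.
Local Open Scope ring_scope.

(* Opinions are vectors in R^d represented as row vectors 'rV[R]_d,
   over an arbitrary real closed field R (e.g. the reals). *)

Definition inner (R : rcfType) (d : nat) (u v : 'rV[R]_d) : R :=
  (u *m v^T) 0 0.

Definition vnorm (R : rcfType) (d : nat) (u : 'rV[R]_d) : R :=
  Num.sqrt (inner u u).

Definition is_unit_vec (R : rcfType) (d : nat) (u : 'rV[R]_d) : Prop :=
  inner u u = 1.

Definition config (R : rcfType) (d n : nat) := 'I_n -> 'rV[R]_d.

Definition is_config (R : rcfType) (d n : nat) (U : config R d n) : Prop :=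
  forall k, is_unit_vec (U k).

Definition stable (R : rcfType) (f : R -> R) : Prop :=
  {in `[-1, 1], forall A, Num.sg (f A) = Num.sg A} /\
  (forall x, -1 <= x <= 1 -> forall e : R, 0 < e ->
     exists2 del : R, 0 < del &
       forall y, -1 <= y <= 1 -> `|y - x| < del -> `|f y - f x| < e).

Definition interact (R : rcfType) (d n : nat) (f : R -> R)
  (U : config R d n) (i j : 'I_n) : config R d n :=
  fun k => if k == i then
    let w := U i + f (inner (U i) (U j)) *: U j in (vnorm w)^-1 *: w
  else U k.

Definition is_sign (R : rcfType) (b : R) : Prop := b = 1 \/ b = -1.

Definition strictly_convex_with (R : rcfType) (d n : nat)
  (U : config R d n) (b : 'I_n -> R) : Prop :=
  (forall k, is_sign (b k)) /\
  forall i j, 0 < inner (b i *: U i) (b j *: U j).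

From HB Require Import structures.
From mathcomp Require Import all_boot all_order all_algebra.
From mathcomp Require Import ring lra.
Import Order.TTheory GRing.Theory Num.Theory.
Local Open Scope ring_scope.

(* Write v_k = b_k u_k, so that the hypothesis says the v_k have pairwise
   positive inner products.  After the interaction, b_i u_i' is a positive
   multiple of v_i + lam v_j with lam = b_i b_j f(A_ij): since f preserves
   signs, lam has the sign of b_i b_j A_ij = <v_i, v_j> > 0.  A combination
   of v_i and v_j with positive coefficients has positive inner product with
   every v_m, and with itself. *)

Section Inner.
Variables (R : rcfType) (d : nat).
Implicit Types (u v w : 'rV[R]_d) (a : R).

Lemma innerE u v : inner u v = \sum_k u 0 k * v 0 k.
Proof. by rewrite /inner !mxE; apply: eq_bigr => k _; rewrite mxE. Qed.

Lemma innerC u v : inner u v = inner v u.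
Proof. by rewrite !innerE; apply: eq_bigr => k _; rewrite mulrC. Qed.

Lemma innerDl u v w : inner (u + v) w = inner u w + inner v w.
Proof. by rewrite !innerE -big_split; apply: eq_bigr => k _; rewrite mxE mulrDl. Qed.

Lemma innerDr u v w : inner w (u + v) = inner w u + inner w v.
Proof. by rewrite innerC innerDl !(innerC w). Qed.

Lemma innerZl a u w : inner (a *: u) w = a * inner u w.
Proof. by rewrite !innerE mulr_sumr; apply: eq_bigr => k _; rewrite mxE mulrA. Qed.

Lemma innerZr a u w : inner w (a *: u) = a * inner w u.
Proof. by rewrite innerC innerZl innerC. Qed.

Lemma inner_ge0 u : 0 <= inner u u.
Proof. by rewrite innerE; apply: sumr_ge0 => k _; rewrite -expr2 sqr_ge0. Qed.

Lemma inner_unit_itv u v :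
  is_unit_vec u -> is_unit_vec v -> -1 <= inner u v <= 1.
Proof.
move=> hu hv; have hp := inner_ge0 (u + v); have hm := inner_ge0 (u + (-1) *: v).
rewrite !(innerDl, innerDr, innerZl, innerZr) hu hv (innerC v) in hp hm.
by apply/andP; split; lra.
Qed.

Lemma inner_cone_gt0 u v w lam :
  0 < lam -> 0 < inner u w -> 0 < inner v w -> 0 < inner (u + lam *: v) w.
Proof.
by move=> lam_gt0 uw vw; rewrite innerDl innerZl addr_gt0 // mulr_gt0.
Qed.

Section PairwisePositive.
Variables (n : nat) (V : 'I_n -> 'rV[R]_d).
Hypothesis V_pos : forall k l, 0 < inner (V k) (V l).

Lemma cone_self_gt0 i j lam :
  0 < lam -> 0 < inner (V i + lam *: V j) (V i + lam *: V j).
Proof. by move=> lam_gt0; apply: inner_cone_gt0; rewrite // innerC inner_cone_gt0. Qed.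

Lemma pairwise_pos_update i j c lam : 0 < c -> 0 < lam ->
  forall k l, 0 < inner (if k == i then c *: (V i + lam *: V j) else V k)
                        (if l == i then c *: (V i + lam *: V j) else V l).
Proof.
move=> c_gt0 lam_gt0 k l.
have w_pos m : 0 < inner (V i + lam *: V j) (V m) by apply: inner_cone_gt0.
case: eqP => _; case: eqP => _; rewrite ?innerZl ?innerZr.
- by rewrite !mulr_gt0 // cone_self_gt0.
- by rewrite mulr_gt0.
- by rewrite innerC mulr_gt0.
- exact: V_pos.
Qed.

End PairwisePositive.
End Inner.

Lemma is_sign_sqr (R : rcfType) (b : R) : is_sign b -> b * b = 1.
Proof. by case=> ->; rewrite ?mulrNN mulr1. Qed.

Lemma sgr_eq_mul_gt0 (R : realDomainType) (x y : R) :
  Num.sg x = Num.sg y -> y != 0 -> 0 < x * y.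
Proof.
move=> sgxy y0; rewrite -sgr_cp0 sgrM sgxy -expr2 -sgrX.
by rewrite gtr0_sg // exprn_even_gt0.
Qed.

Lemma stable_mul_gt0 (R : rcfType) (f : R -> R) (A : R) :
  stable f -> -1 <= A <= 1 -> A != 0 -> 0 < f A * A.
Proof.
by move=> [f_sg _] A_itv; apply: sgr_eq_mul_gt0; apply: f_sg; rewrite in_itv.
Qed.

Lemma signed_coef_gt0 (R : numDomainType) (bi bj a A : R) :
  bi * bi = 1 -> bj * bj = 1 -> 0 < a * A -> 0 < bi * bj * A -> 0 < bi * bj * a.
Proof.
move=> hi hj aA bA; rewrite -(pmulr_lgt0 _ bA).
suff -> : bi * bj * a * (bi * bj * A) = a * A by [].
by transitivity ((bi * bi) * (bj * bj) * (a * A)); [ring | rewrite hi hj !mul1r].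
Qed.

Theorem mainTheorem16 (R : rcfType) (d n : nat) (f : R -> R)
  (U : config R d n) (b : 'I_n -> R) (i j : 'I_n) :
  stable f -> is_config U -> i != j ->
  strictly_convex_with U b ->
  strictly_convex_with (interact f U i j) b.
Proof.
move=> f_stable U_unit _ [b_sign U_pos]; split => //.
set V := fun k => b k *: U k; set A := inner (U i) (U j).
have bb k : b k * b k = 1 by apply: is_sign_sqr.
have bA_pos : 0 < b i * b j * A by have := U_pos i j; rewrite innerZl innerZr mulrA.
have aA_pos : 0 < f A * A.
  apply: stable_mul_gt0 => //; first exact: inner_unit_itv.
  by apply: contraTneq bA_pos => ->; rewrite mulr0 ltxx.
set w := U i + f A *: U j; set c := (vnorm w)^-1; set lam := b i * b j * f A.
have w_eq : b i *: w = V i + lam *: V j.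
  rewrite /V /lam scalerDr !scalerA; congr (_ + _ *: _).
  transitivity (b i * f A * (b j * b j)); first by rewrite bb mulr1.
  by ring.
have lam_pos : 0 < lam by exact: signed_coef_gt0 (bb i) (bb j) aA_pos bA_pos.
have c_pos : 0 < c.
  rewrite invr_gt0 sqrtr_gt0 (_ : inner w w = inner (b i *: w) (b i *: w)).
    by rewrite w_eq cone_self_gt0.
  by rewrite innerZl innerZr mulrA bb mul1r.
have interact_eq m : b m *: interact f U i j m =
    if m == i then c *: (V i + lam *: V j) else V m.
  by rewrite /interact; case: eqP => [->|//]; rewrite scalerA mulrC -scalerA w_eq.
by move=> k l; rewrite !interact_eq; apply: pairwise_pos_update.
Qed.
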